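(* Let $\Omega\in\mathbb{C}^{N\times N}$ be skew-Hermitian and let $A\neq 0$ be an eigenvector of $\mathrm{ad}_\Omega$ to the non-zero eigenvalue $i\varphi$, $\varphi\in\mathbb{R}\setminus\{0\}$. Then: (a) $A^\dagger$ is an eigenvector of $\mathrm{ad}_\Omega$ to the eigenvalue $-i\varphi$; (b) $A$ is nilpotent; (c) $[A,A^\dagger]\neq 0$ and $[\Omega,[A,A^\dagger]]=0$.
   Context: $\mathrm{ad}_\Omega(X)=[\Omega,X]=\Omega X-X\Omega$. *)

From HB Require Import structures.
From mathcomp Require Import all_boot all_order all_algebra.
From mathcomp Require Import complex.
From mathcomp Require Import all_classical all_reals.
Set Implicit Arguments. Unset Strict Implicit. Unset Printing Implicit Defensive.
Import Order.TTheory GRing.Theory Num.Theory.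
Local Open Scope ring_scope.

Definition dagger (R : realType) (N : nat) (A : 'M[R[i]]_N) : 'M[R[i]]_N :=
  (map_mx (@conjc R) A)^T.

Definition ad (R : realType) (N : nat) (Om X : 'M[R[i]]_N) : 'M[R[i]]_N :=
  Om *m X - X *m Om.

Definition skew_hermitian (R : realType) (N : nat) (Om : 'M[R[i]]_N) : Prop :=
  dagger Om = - Om.

(* k-th matrix power (works for any size N, including N = 0). *)
Definition mxpow (R : realType) (N : nat) (A : 'M[R[i]]_N) (k : nat) : 'M[R[i]]_N :=
  iter k (mulmx A) 1%:M.

Definition mx_nilpotent (R : realType) (N : nat) (A : 'M[R[i]]_N) : Prop :=
  exists k : nat, mxpow A k = 0.

Definition iphi (R : realType) (phi : R) : R[i] := Complex 0 phi.

(* Taking adjoints in [Om A - A Om = i phi A] and using [Om^dagger = - Om]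
   gives (a).  By the Leibniz rule for [ad Om], a nonzero power [A^k] is an
   eigenvector of the linear map [ad Om] to the eigenvalue [i k phi]; these
   are pairwise distinct while [ad Om] has at most [N^2] eigenvalues, so some
   power of [A] vanishes, which is (b).  By Leibniz again [A A^dagger] and
   [A^dagger A] are eigenvectors to [i phi - i phi = 0], and if they were
   equal then [A] would be normal and nilpotent: [A^dagger A] would be a
   nilpotent Hermitian matrix, hence 0, hence [A = 0]. *)

From HB Require Import structures.
From mathcomp Require Import all_boot all_order all_algebra.
From mathcomp Require Import complex.
From mathcomp Require Import all_classical all_reals.
Set Implicit Arguments. Unset Strict Implicit. Unset Printing Implicit Defensive.
Import Order.TTheory GRing.Theory Num.Theory.
Local Open Scope ring_scope.

Lemma exists_eigen_natmul_eq0 (F : numFieldType) m (M : 'M[F]_m) (c : F)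
    (v : nat -> 'rV[F]_m) :
  c != 0 -> (forall k, v k *m M = (k%:R * c) *: v k) -> exists k, v k = 0.
Proof.
move=> c_neq0 vM; set s := size (char_poly M).
have [/existsP [k /eqP vk0] | /existsPn v_neq0] :=
  boolP [exists k : 'I_s, v k == 0]; first by exists k.
have roots_char : all (root (char_poly M)) (mkseq (fun k => k%:R * c) s).
  apply/allP => _ /mapP [k + ->]; rewrite mem_iota add0n => ks.
  rewrite -eigenvalue_root_char; apply/eigenvalueP.
  by exists (v k); [exact: vM | exact: (v_neq0 (Ordinal ks))].
have uniq_roots : uniq (mkseq (fun k => k%:R * c) s).
  by apply: mkseq_uniq => a b /(mulIf c_neq0) /eqP; rewrite eqr_nat => /eqP.
have := max_poly_roots (monic_neq0 (char_poly_monic M)) roots_char uniq_roots.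
by rewrite size_mkseq ltnn.
Qed.

Section Dagger.
Variables (R : realType) (n : nat).
Implicit Types A B : 'M[R[i]]_n.

Lemma dagger_mul A B : dagger (A *m B) = dagger B *m dagger A.
Proof. by rewrite /dagger map_mxM trmx_mul. Qed.

Lemma daggerK : involutive (@dagger R n).
Proof. by move=> A; apply/matrixP => i j; rewrite !mxE conjcK. Qed.

Lemma daggerB A B : dagger (A - B) = dagger A - dagger B.
Proof. by rewrite /dagger map_mxB linearB. Qed.

Lemma daggerZ c A : dagger (c *: A) = conjc c *: dagger A.
Proof. by rewrite /dagger map_mxZ linearZ. Qed.

Lemma dagger1 : dagger (1%:M : 'M[R[i]]_n) = 1%:M.
Proof. by rewrite /dagger map_mx1 trmx1. Qed.

Lemma dagger_eq0 A : (dagger A == 0) = (A == 0).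
Proof.
have dagger0 : dagger (0 : 'M[R[i]]_n) = 0 by rewrite /dagger map_mx0 trmx0.
by apply/eqP/eqP => [A'0|->]; rewrite // -[A]daggerK A'0.
Qed.

(* Entry [(j, j)] of [dagger A *m A] is the sum over [i] of [|A i j|^2]. *)
Lemma dagger_mul_self_eq0 A : dagger A *m A = 0 -> A = 0.
Proof.
move=> /matrixP A'A0; apply/matrixP => i j; rewrite mxE.
have /eqP := A'A0 j j; rewrite !mxE psumr_eq0 => [/allP/(_ i)|k _].
  rewrite mem_index_enum /dagger mxE => /(_ isT).
  by rewrite mxE mulf_eq0 conjc_eq0 orbb => /eqP.
by rewrite /dagger !mxE mulrC mulcJ_ge0.
Qed.

End Dagger.

Section Powers.
Variables (R : realType) (n : nat).
Implicit Types A H : 'M[R[i]]_n.+1.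

Lemma mxpowE A k : mxpow A k = A ^+ k.
Proof. by elim: k => [|k IHk]; rewrite ?expr0 ?idmxE // exprS -IHk. Qed.

Lemma daggerX A k : dagger (A ^+ k) = dagger A ^+ k.
Proof.
elim: k => [|k IHk]; first by rewrite !expr0 -idmxE dagger1.
by rewrite exprS -mulmxE dagger_mul IHk mulmxE -exprSr.
Qed.

Lemma hermitian_nilpotent_eq0 H k : dagger H = H -> H ^+ k = 0 -> H = 0.
Proof.
move=> herm_H; elim: k => [|[|k] IHk] Hk0.
- by move/eqP: Hk0; rewrite expr0 oner_eq0.
- by rewrite -[H]expr1.
apply/IHk/dagger_mul_self_eq0.
by rewrite daggerX herm_H mulmxE -exprD -addSnnS exprD Hk0 mul0r.
Qed.

End Powers.

Lemma normal_nilpotent_eq0 (R : realType) n (A : 'M[R[i]]_n) :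
  A *m dagger A = dagger A *m A -> mx_nilpotent A -> A = 0.
Proof.
case: n A => [A _ _|n A normalA [k]]; first exact: flatmx0.
rewrite mxpowE => Ak0.
apply/dagger_mul_self_eq0/(@hermitian_nilpotent_eq0 _ _ _ k).
  by rewrite dagger_mul daggerK.
by rewrite mulmxE exprMn_comm ?Ak0 ?mulr0 // /GRing.comm -!mulmxE normalA.
Qed.

Section Adjoint.
Variables (R : realType) (n : nat) (Om : 'M[R[i]]_n).
Implicit Types (A X Y : 'M[R[i]]_n) (a b c : R[i]).

Lemma adB X Y : ad Om (X - Y) = ad Om X - ad Om Y.
Proof.
by rewrite /ad mulmxBr mulmxBl !opprB addrACA [RHS]addrACA [- _ - _]addrC.
Qed.

Lemma ad_mul X Y : ad Om (X *m Y) = ad Om X *m Y + X *m ad Om Y.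
Proof. by rewrite /ad mulmxBl mulmxBr !mulmxA addrA subrK. Qed.

Lemma ad_dagger X : skew_hermitian Om -> ad Om (dagger X) = dagger (ad Om X).
Proof.
move=> skewOm; rewrite /ad daggerB !dagger_mul skewOm.
by rewrite mulmxN mulNmx opprK addrC.
Qed.

Lemma ad_eigen_mul a b X Y : ad Om X = a *: X -> ad Om Y = b *: Y ->
  ad Om (X *m Y) = (a + b) *: (X *m Y).
Proof.
by move=> adX adY; rewrite ad_mul adX adY scalerDl scalemxAl scalemxAr.
Qed.

Lemma ad_eigen_mxpow c A k : ad Om A = c *: A ->
  ad Om (mxpow A k) = (k%:R * c) *: mxpow A k.
Proof.
move=> adA; elim: k => [|k IHk].
  by rewrite /ad mulmx1 mul1mx subrr mul0r scale0r.
by rewrite [mxpow A k.+1]/= (ad_eigen_mul adA IHk) mulrSr mulrDl mul1r addrC.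
Qed.

Definition ad_mx : 'M[R[i]]_(n * n) := lin_mulmx Om - lin_mulmxr Om.

Lemma mxvec_ad X : mxvec X *m ad_mx = mxvec (ad Om X).
Proof. by rewrite mulmxBr !mul_vec_lin /ad linearB. Qed.

Lemma ad_eigen_nilpotent c A : c != 0 -> ad Om A = c *: A -> mx_nilpotent A.
Proof.
move=> c_neq0 adA; have [k Ak0] : exists k, mxvec (mxpow A k) = 0.
  apply: (exists_eigen_natmul_eq0 (M := ad_mx) c_neq0) => k.
  by rewrite mxvec_ad (ad_eigen_mxpow _ adA) linearZ.
by exists k; apply/eqP; rewrite -mxvec_eq0 Ak0.
Qed.

End Adjoint.

Lemma iphiN (R : realType) (phi : R) : iphi (- phi) = - iphi phi.
Proof. by apply/eqP; rewrite eq_complex /= oppr0 !eqxx. Qed.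

Theorem lemma2p24 (R : realType) (N : nat) (Om A : 'M[R[i]]_N) (phi : R) :
  skew_hermitian Om ->
  A != 0 ->
  phi != 0 ->
  ad Om A = iphi phi *: A ->
  [/\ dagger A != 0 /\ ad Om (dagger A) = iphi (- phi) *: dagger A,
      mx_nilpotent A &
      (A *m dagger A - dagger A *m A != 0 /\
       ad Om (A *m dagger A - dagger A *m A) = 0)].
Proof.
move=> skewOm A_neq0 phi_neq0 adA.
have adA' : ad Om (dagger A) = iphi (- phi) *: dagger A.
  by rewrite ad_dagger // adA daggerZ.
have nilA : mx_nilpotent A.
  by apply: (ad_eigen_nilpotent _ adA); apply: contra phi_neq0 => /eqP [->].
split=> //; first by rewrite dagger_eq0.
split.
  apply: contra A_neq0 => /eqP /subr0_eq normalA.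
  by rewrite (normal_nilpotent_eq0 normalA nilA).
rewrite adB (ad_eigen_mul adA adA') (ad_eigen_mul adA' adA) iphiN.
by rewrite addrN addNr !scale0r subrr.
Qed.
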